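(* For all $n\ge1$, $d\ge2$ and $1\le r\le n$, $$b_{n,d}(\Delta_{n-r})=\sum_{x}b_{n,d-1}(x),$$ where the sum ranges over all simple $n$-braids $x$ that are right divisible by $\Delta_{n-r}$ in $B_n^+$.
   Context: $B_n^+$ is the positive braid monoid with generators $\sigma_1,\dots,\sigma_{n-1}$ and relations $\sigma_i\sigma_j=\sigma_j\sigma_i$ ($|i-j|\ge2$), $\sigma_i\sigma_j\sigma_i=\sigma_j\sigma_i\sigma_j$ ($|i-j|=1$). $\Delta_1=1$, $\Delta_m=\sigma_1\cdots\sigma_{m-1}\Delta_{m-1}$, with the convention $\Delta_0=1$; $\Delta_m$ is viewed in $B_n^+$ for $m\le n$. Simple $n$-braids are the left (equivalently right) divisors of $\Delta_n$ in $B_n^+$. For simple $x$, $D_L(x)$ (resp. $D_R(x)$) is the set of $i\in\{1,\dots,n-1\}$ with $\sigma_i$ a left (resp. right) divisor of $x$. A sequence $(x_1,\dots,x_d)$ of simple $n$-braids is normal if $x_k=\gcd(\Delta_n,x_k\cdots x_d)$ (greatest common left divisor) for each $k$; equivalently $D_R(x_k)\supseteq D_L(x_{k+1})$ for all $k<d$. For a simple $n$-braid $x$, $b_{n,d}(x)$ is the number of normal sequences $(x_1,\dots,x_{d-1},x)$. *)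

From Stdlib Require Import Relation_Operators.
From mathcomp Require Import all_boot.
From mathcomp Require Import boolp.



Unset Printing Implicit Defensive.

(* Generators of B_n^+ : i : 'I_n.-1 stands for sigma_(i+1). *)
Definition gen (n : nat) := 'I_n.-1.
Definition word (n : nat) := seq (gen n).

(* defining relations of B_n^+ (as unordered instances, listed in one
   direction; symmetry is added by the closure below) *)
Definition braid_rel (n : nat) (u v : word n) : Prop :=
  (exists i j : gen n, ((i.+1 < j) || (j.+1 < i))%N /\
     u = [:: i; j] /\ v = [:: j; i]) \/
  (exists i j : gen n, ((i.+1 == j) || (j.+1 == i)) /\
     u = [:: i; j; i] /\ v = [:: j; i; j]).

Definition bstep (n : nat) (u v : word n) : Prop :=
  exists a b x y : word n, braid_rel n x y /\ u = a ++ x ++ b /\ v = a ++ y ++ b.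

Definition beq (n : nat) : word n -> word n -> Prop :=
  clos_refl_sym_trans (word n) (bstep n).

(* Delta_0 = Delta_1 = 1, Delta_m = sigma_1 ... sigma_(m-1) Delta_(m-1) *)
Fixpoint delta (n : nat) (m : nat) : word n :=
  match m with
  | 0 => [::]
  | m'.+1 => pmap (fun i => (insub i : option (gen n))) (iota 0 m') ++ delta n m'
  end.

Definition ldiv (n : nat) (u w : word n) : Prop := exists v, beq n (u ++ v) w.
Definition rdiv (n : nat) (u w : word n) : Prop := exists v, beq n (v ++ u) w.

Definition simple (n : nat) (w : word n) : Prop := ldiv n w (delta n n).

(* Finite carrier: words of length <= |Delta_n| (all simple braids have
   representatives there); one canonical representative per class. *)
Definition BW (n : nat) := {m : 'I_(size (delta n n)).+1 & m.-tuple (gen n)}.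
Definition bw2w (n : nat) (x : BW n) : word n := tagged x.
Definition is_rep (n : nat) (x : BW n) : bool :=
  [pick y : BW n | `[< beq n (bw2w n y) (bw2w n x) >] ] == Some x.

Definition SB (n : nat) := {x : BW n | is_rep n x && `[< simple n (bw2w n x) >]}.
Definition sbw (n : nat) (s : SB n) : word n := bw2w n (val s).

Definition DL (n : nat) (w : word n) : {set gen n} := [set i | `[< ldiv n [:: i] w >]].
Definition DR (n : nat) (w : word n) : {set gen n} := [set i | `[< rdiv n [:: i] w >]].

Definition nrel (n : nat) : rel (word n) := fun u v => DL n v \subset DR n u.
Definition normal (n : nat) (s : seq (word n)) : bool := sorted (nrel n) s.

Definition b (n d : nat) (x : word n) : nat :=
  #|[set t : (d.-1).-tuple (SB n) | normal n (rcons (map (sbw n) t) x)]|.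

From Stdlib Require Import Relation_Operators.
From mathcomp Require Import all_boot.
From mathcomp Require Import boolp.
From mathcomp Require Import zify.
From Stdlib Require Import Setoid Morphisms.

(* Write m = n - r. In a normal sequence (x_1, ..., x_(d-1), Delta_m) the last factor Delta_m
   interacts with the rest only through D_L(Delta_m) ⊆ D_R(x_(d-1)), so peeling it off expresses
   b_{n,d}(Delta_m) as the sum of b_{n,d-1}(x) over the simple x satisfying that inclusion.
   Now D_L(Delta_m) = {sigma_1, ..., sigma_(m-1)}, and Delta_m is invariant under word reversal
   and is the least common left multiple of sigma_1, ..., sigma_(m-1); hence the inclusion says
   exactly that Delta_m right-divides x.
   The lcm property rests on Garside's lemma: sigma_i u = sigma_j v in B_n^+ forces u and v to
   be the complements of sigma_i and sigma_j in their lcm followed by a common tail. It is proved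
   by induction on length, composing common tails along a chain of elementary relations. *)

(** * Positive braid words *)

(* Letters are unbounded natural numbers, letter i standing for sigma_(i+1) as in [gen n]. *)
Definition far (a b : nat) := (a.+1 < b) || (b.+1 < a).
Definition adj (a b : nat) := (a.+1 == b) || (b.+1 == a).

Lemma farC a b : far a b = far b a. Proof. by rewrite /far orbC. Qed.
Lemma adjC a b : adj a b = adj b a. Proof. by rewrite /adj orbC. Qed.
Lemma far_or_adj {a b} : a != b -> far a b || adj a b. Proof. rewrite /far /adj; lia. Qed.
Lemma far_irr a : far a a = false. Proof. rewrite /far; lia. Qed.
Lemma adj_irr a : adj a a = false. Proof. rewrite /adj; lia. Qed.
Lemma far_adjF a b : far a b -> adj a b = false. Proof. rewrite /far /adj; lia. Qed.

(* [i :: cpl i j ≡ j :: cpl j i] is the least common left multiple of the letters i and j. *)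
Definition cpl (i j : nat) : seq nat :=
  if i == j then [::] else if far i j then [:: j] else [:: j; i].

Variant cpl_spec (i j : nat) : seq nat -> seq nat -> Type :=
  | CplSame of i = j : cpl_spec i j [::] [::]
  | CplFar of far i j : cpl_spec i j [:: j] [:: i]
  | CplAdj of adj i j : cpl_spec i j [:: j; i] [:: i; j].

Lemma cplP i j : cpl_spec i j (cpl i j) (cpl j i).
Proof.
rewrite /cpl eq_sym farC; have [<-|Nij] := eqVneq j i; first exact: CplSame.
case: ifP => Fij; first by apply: CplFar; rewrite farC.
by apply: CplAdj; move: Nij Fij; rewrite /far /adj; lia.
Qed.

Lemma all_cpl (P : pred nat) i j : P i -> P j -> all P (cpl i j).
Proof. by move=> Pi Pj; case: cplP => /= *; rewrite ?Pi ?Pj. Qed.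

Inductive braid_step : seq nat -> seq nat -> Prop :=
  | StepFar p q x y : far x y -> braid_step (p ++ [:: x; y] ++ q) (p ++ [:: y; x] ++ q)
  | StepAdj p q x y : adj x y -> braid_step (p ++ [:: x; y; x] ++ q) (p ++ [:: y; x; y] ++ q).

Arguments StepFar p q {x y}.
Arguments StepAdj p q {x y}.

Definition braid_eq := clos_refl_sym_trans (seq nat) braid_step.
Infix "≡" := braid_eq (at level 70).

Lemma braid_eq_refl u : u ≡ u. Proof. exact: rst_refl. Qed.
#[local] Hint Resolve braid_eq_refl : core.

#[export] Instance braid_eq_Equivalence : Equivalence braid_eq.
Proof. split; [exact: rst_refl | exact: rst_sym | exact: rst_trans]. Qed.

Lemma clos_rst_morph {A T : Type} {step : relation A} {R : relation T} (f : A -> T) :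
  Equivalence R -> (forall x y, step x y -> R (f x) (f y)) ->
  forall u v, clos_refl_sym_trans A step u v -> R (f u) (f v).
Proof.
move=> eqR Hf u v; elim=> {u v} [x y /Hf //|x|x y _ Hxy|x y z _ Hxy _ Hyz].
- reflexivity.
- by symmetry.
- by transitivity (f y).
Qed.

Lemma braid_step_catl p x y : braid_step x y -> braid_step (p ++ x) (p ++ y).
Proof.
case=> a q u v H.
- by move: (StepFar (p ++ a) q H); rewrite -!catA.
- by move: (StepAdj (p ++ a) q H); rewrite -!catA.
Qed.

Lemma braid_step_catr q x y : braid_step x y -> braid_step (x ++ q) (y ++ q).
Proof. by case=> a r u v H; rewrite -!catA; constructor. Qed.

Lemma braid_step_rev x y : braid_step x y -> braid_step (rev x) (rev y).
Proof. by case=> a q u v H; rewrite !rev_cat -!catA /=; constructor; rewrite // farC. Qed.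

Lemma braid_eq_map (f : seq nat -> seq nat) {u v} :
  (forall x y, braid_step x y -> braid_step (f x) (f y)) -> u ≡ v -> f u ≡ f v.
Proof.
move=> Hf; apply: (clos_rst_morph (R := braid_eq)) => x y /Hf; exact: rst_step.
Qed.

#[export] Instance cat_braid_eq : Proper (braid_eq ==> braid_eq ==> braid_eq) (@cat nat).
Proof.
move=> u u' Hu v v' Hv; apply: (rst_trans _ _ _ (u' ++ v)).
- exact: (braid_eq_map (cat^~ v) (braid_step_catr v)).
- exact: (braid_eq_map (cat u') (braid_step_catl u')).
Qed.

#[export] Instance cons_braid_eq : Proper (eq ==> braid_eq ==> braid_eq) (@cons nat).
Proof. by move=> a _ <- u v H; exact: (cat_braid_eq [:: a] _ (braid_eq_refl _) _ _ H). Qed.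

#[export] Instance rev_braid_eq : Proper (braid_eq ==> braid_eq) (@rev nat).
Proof. move=> u v; exact: braid_eq_map braid_step_rev. Qed.

Lemma braid_eq_size {u v} : u ≡ v -> size u = size v.
Proof. by apply: (clos_rst_morph (R := eq)) => _ _ [] *; rewrite !size_cat. Qed.

Lemma braid_eq_mem {u v} : u ≡ v -> u =i v.
Proof.
move=> H c; apply: (clos_rst_morph (R := eq) (fun w => c \in w) _ _ _ _ H) => _ _ [] a q x y _;
by rewrite !mem_cat !inE; case: (c == x); case: (c == y); rewrite ?orbT.
Qed.

Lemma far_swap {x y w} : far x y -> [:: x, y & w] ≡ [:: y, x & w].
Proof. by move=> F; apply: rst_step; apply: (StepFar [::] w F). Qed.

Lemma adj_braid {x y w} : adj x y -> [:: x, y, x & w] ≡ [:: y, x, y & w].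
Proof. by move=> A; apply: rst_step; apply: (StepAdj [::] w A). Qed.

Lemma far_cons_cat a c w : all (far a) c -> a :: c ++ w ≡ c ++ a :: w.
Proof. by elim: c => //= x c IH /andP [Fax /IH Hc]; rewrite (far_swap Fax) Hc. Qed.

(** * Garside's lemma *)

Definition common_tail (i : nat) (u : seq nat) (j : nat) (v : seq nat) :=
  exists w, u ≡ cpl i j ++ w /\ v ≡ cpl j i ++ w.

Lemma common_tail_sym {i u j v} : common_tail i u j v -> common_tail j v i u.
Proof. by case=> w [Hu Hv]; exists w. Qed.

#[export] Instance common_tail_braid_eq :
  Proper (eq ==> braid_eq ==> eq ==> braid_eq ==> iff) common_tail.
Proof.
move=> i _ <- u u' Hu j _ <- v v' Hv.
by split=> -[w [H1 H2]]; exists w; rewrite -?Hu -?Hv // Hu Hv.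
Qed.

Lemma common_tail_idE i u v : common_tail i u i v <-> u ≡ v.
Proof.
rewrite /common_tail /cpl eqxx /=.
by split=> [[w [-> ->]] // | H]; exists v.
Qed.

Lemma common_tail_farE {i u j v} : far i j ->
  common_tail i u j v <-> exists w, u ≡ j :: w /\ v ≡ i :: w.
Proof.
move=> Fij; rewrite /common_tail; case: (cplP i j) Fij => [<-|//|Aij].
  by rewrite far_irr.
by move/far_adjF; rewrite Aij.
Qed.

Lemma common_tail_adjE {i u j v} : adj i j ->
  common_tail i u j v <-> exists w, u ≡ [:: j, i & w] /\ v ≡ [:: i, j & w].
Proof.
move=> Aij; rewrite /common_tail; case: (cplP i j) Aij => [<-|Fij|//].
  by rewrite adj_irr.
by rewrite far_adjF.
Qed.

Lemma common_tail_of_step i u j v : braid_step (i :: u) (j :: v) -> common_tail i u j v.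
Proof.
move=> H; inversion H as [p q x y F E1 E2|p q x y A E1 E2].
- case: p E1 E2 => [|c p] /= [<- <-] [<- <-].
    by apply/(common_tail_farE F); exists q.
  by apply/common_tail_idE; apply: rst_step; apply: StepFar.
- case: p E1 E2 => [|c p] /= [<- <-] [<- <-].
    by apply/(common_tail_adjE A); exists q.
  by apply/common_tail_idE; apply: rst_step; apply: StepAdj.
Qed.

Ltac size_lt :=
  repeat match goal with H : _ ≡ _ |- _ => move/braid_eq_size: H => /= H end; lia.

(* A chain of elementary relations from [i :: u] to [j :: v] passes through words [k :: t] of the
   same length; common tails compose along it given the lemma for shorter words. *)
Section CommonTailInduction.

Variable S : nat.
Hypothesis IH : forall {i j u v}, i :: u ≡ j :: v -> size u < S -> common_tail i u j v.

Lemma common_tail_trans_far {i u k t j v} : size t = S -> far i k -> far k j ->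
  common_tail i u k t -> common_tail k t j v -> common_tail i u j v.
Proof.
move=> St Fik Fkj /(common_tail_farE Fik) [w1 [Hu Ht1]] /(common_tail_farE Fkj) [w2 [Ht2 Hv]].
have [z [Hw1 Hw2]] : common_tail i w1 j w2 by apply: IH; [rewrite -Ht1 | size_lt].
exists (k :: z); split; [rewrite Hu Hw1 | rewrite Hv Hw2];
  by rewrite far_cons_cat // all_cpl // farC.
Qed.

Lemma common_tail_trans_far_adj {i u k t j v} : size t = S -> far i k -> adj k j ->
  common_tail i u k t -> common_tail k t j v -> common_tail i u j v.
Proof.
move=> St Fik Akj /(common_tail_farE Fik) [w1 [Hu Ht1]] /(common_tail_adjE Akj) [w2 [Ht2 Hv]].
have Fki : far k i by rewrite farC.
have [z] : common_tail i w1 j (k :: w2) by apply: IH; [rewrite -Ht1 | size_lt].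
case: (cplP i j) => [Eij|Fij|Aij] /= [Hw1 Hkw2].
- by move: Fik Akj; rewrite Eij /far /adj; lia.
- have [z' [Hw2 Hz]] := (common_tail_farE Fki).1 (IH Hkw2 ltac:(size_lt)).
  apply/(common_tail_farE Fij); exists [:: k, j & z']; split.
    by rewrite Hu Hw1 Hz (adj_braid Akj).
  by rewrite Hv Hw2 -(far_swap Fij) -(far_swap Fik).
- have Ajk : adj j k by rewrite adjC.
  have [z' [Hw2 Hjz]] := (common_tail_farE Fki).1 (IH Hkw2 ltac:(size_lt)).
  have [z'' [Hz Hz']] := (common_tail_adjE Ajk).1 (IH Hjz ltac:(size_lt)).
  apply/(common_tail_adjE Aij); exists [:: k, j, i & z'']; split.
    by rewrite Hu Hw1 Hz (far_swap Fik) (adj_braid Akj) -(adj_braid Aij) -(far_swap Fik).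
  rewrite Hv Hw2 Hz' -(adj_braid Aij) -(far_swap Fik).
  by rewrite [X in [:: _, _, _ & X]](far_swap Fik) (adj_braid Akj).
Qed.

Lemma common_tail_trans_adj {i u k t j v} : size t = S -> adj i k -> adj k j ->
  common_tail i u k t -> common_tail k t j v -> common_tail i u j v.
Proof.
move=> St Aik Akj /(common_tail_adjE Aik) [w1 [Hu Ht1]] /(common_tail_adjE Akj) [w2 [Ht2 Hv]].
have Aki : adj k i by rewrite adjC.
have [z] : common_tail i (k :: w1) j (k :: w2) by apply: IH; [rewrite -Ht1 | size_lt].
case: (cplP i j) => [Eij|Fij|Aij] /= [Hw1 Hw2].
- rewrite -Eij in Hv *.
  have /common_tail_idE Hw : common_tail k w1 k w2.
    by apply: IH; [rewrite Hw1 Hw2 | size_lt].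
  by apply/common_tail_idE; rewrite Hu Hv Hw.
- have [z1 [Hw1' Hz1]] := (common_tail_adjE Akj).1 (IH Hw1 ltac:(size_lt)).
  have [z2 [Hw2' Hz2]] := (common_tail_adjE Aki).1 (IH Hw2 ltac:(size_lt)).
  have /common_tail_idE Hz12 : common_tail k (j :: z1) k (i :: z2).
    by apply: IH; [rewrite -Hz1 Hz2 | size_lt].
  have Fji : far j i by rewrite farC.
  have [z3 [Hz1' Hz2']] := (common_tail_farE Fji).1 (IH Hz12 ltac:(size_lt)).
  apply/(common_tail_farE Fij); exists [:: k, j, i, k & z3]; split.
    by rewrite Hu Hw1' Hz1' (far_swap Fij) (adj_braid Aik) (adj_braid Akj).
  by rewrite Hv Hw2' Hz2' -(far_swap Fij) -(adj_braid Akj) -(adj_braid Aik) (far_swap Fij).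
- by move: Aik Akj Aij; rewrite /adj; lia.
Qed.

Lemma common_tail_trans {i u k t j v} : size t = S ->
  common_tail i u k t -> common_tail k t j v -> common_tail i u j v.
Proof.
move=> St K1 K2.
have [Eik|Nik] := eqVneq i k; first by move: K1; rewrite Eik => /common_tail_idE ->.
have [Ekj|Nkj] := eqVneq k j; first by move: K2; rewrite -Ekj => /common_tail_idE <-.
case/orP: (far_or_adj Nik) => [Fik|Aik]; case/orP: (far_or_adj Nkj) => [Fkj|Akj].
- exact: (common_tail_trans_far St Fik Fkj).
- exact: (common_tail_trans_far_adj St Fik Akj).
- have Fjk : far j k by rewrite farC.
  have Aki : adj k i by rewrite adjC.
  apply: common_tail_sym.
  exact: common_tail_trans_far_adj St Fjk Aki (common_tail_sym K2) (common_tail_sym K1).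
- exact: (common_tail_trans_adj St Aik Akj).
Qed.

Lemma common_tail_of_braid_eq x y : x ≡ y -> forall i u j v,
  x = i :: u -> y = j :: v -> size u = S -> common_tail i u j v.
Proof.
elim=> {x y} [x y Hxy|x|x y Hxy IHxy|x y z Hxy IHxy _ IHyz] i u j v Ex Ey; subst.
- by move=> _; apply: common_tail_of_step.
- by case: Ey => <- <- _; apply/common_tail_idE.
- move=> Su; apply: common_tail_sym; apply: IHxy => //.
  by move/braid_eq_size: Hxy => [->].
- case: y Hxy IHxy IHyz => [/braid_eq_size //|k t] Hxy IHxy IHyz Su.
  have St : size t = S by move/braid_eq_size: Hxy => [<-].
  exact: (common_tail_trans St (IHxy _ _ _ _ erefl erefl Su) (IHyz _ _ _ _ erefl erefl St)).
Qed.

End CommonTailInduction.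

Theorem braid_eq_cons i j u v : i :: u ≡ j :: v -> common_tail i u j v.
Proof.
move: {2}(size u) (erefl (size u)) => S.
elim/ltn_ind: S i j u v => S IH i j u v Su E.
apply: (common_tail_of_braid_eq S _ _ _ E _ _ _ _ erefl erefl Su) => i' j' u' v' E' Hs.
exact: IH Hs _ _ _ _ erefl E'.
Qed.

(** * Divisibility and the Garside element *)

Definition ldivN (a x : seq nat) := exists v, a ++ v ≡ x.
Definition rdivN (a x : seq nat) := exists v, v ++ a ≡ x.

#[export] Instance ldivN_braid_eq : Proper (braid_eq ==> braid_eq ==> iff) ldivN.
Proof.
move=> a a' Ha x x' Hx; rewrite /ldivN.
by split=> -[v H]; exists v; rewrite -?Ha -?Hx // Ha Hx.
Qed.

Lemma rdivN_ldivN_rev a x : rdivN a x <-> ldivN (rev a) (rev x).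
Proof.
split=> -[v H]; exists (rev v); first by rewrite -rev_cat H.
by rewrite -[x]revK -H rev_cat revK.
Qed.

Lemma rdivN_trans a b c : rdivN a b -> rdivN b c -> rdivN a c.
Proof. by move=> [v1 H1] [v2 H2]; exists (v2 ++ v1); rewrite -catA H1. Qed.

Lemma ldivN_far_cat a s y : all (far a) s -> ldivN [:: a] (s ++ y) -> ldivN [:: a] y.
Proof.
elim: s => //= c s IH /andP [Fac /IH {}IH] [v /braid_eq_cons].
by case/(common_tail_farE Fac) => w [_ Hw]; apply: IH; exists w; rewrite Hw.
Qed.

Definition down (j l : nat) : seq nat := rev (iota j l).

Lemma down_S j l : down j l.+1 = (j + l) :: down j l.
Proof. by rewrite /down -addn1 iotaD rev_cat. Qed.

Lemma ldivN_down_of_cons j l z u : j :: z ≡ down j.+1 l.+1 ++ u -> ldivN (down j l.+2) z.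
Proof.
elim: l z u => [|l IH] z u.
  rewrite down_S addn0 => /braid_eq_cons.
  have Aj : adj j j.+1 by rewrite /adj eqxx.
  by case/(common_tail_adjE Aj) => w [Hz _]; exists w; rewrite Hz.
rewrite down_S => /braid_eq_cons.
have Fj : far j (j.+1 + l.+1) by rewrite /far; lia.
case/(common_tail_farE Fj) => w' [Hz Hw'].
have [w Hw] := IH w' u (symmetry Hw').
by exists w; rewrite Hz -Hw down_S addSnnS.
Qed.

Lemma ldivN_down_cat j l y :
  ldivN (down j l.+1) (down 0 j ++ y) -> ldivN (down 0 (j + l.+1)) y.
Proof.
elim: j l y => [|j IH] l y; first by rewrite add0n.
rewrite [down 0 j.+1]down_S add0n addSnnS => -[v Hv]; apply: IH.
exact: ldivN_down_of_cons (symmetry Hv).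
Qed.

Fixpoint deltaN (m : nat) : seq nat := if m is m'.+1 then iota 0 m' ++ deltaN m' else [::].

Lemma deltaNS m : deltaN m.+1 = iota 0 m ++ deltaN m. Proof. by []. Qed.

Lemma deltaN_pred m : deltaN m = deltaN m.-1.+1. Proof. by case: m. Qed.

Lemma deltaN_bound m : all (fun c => c < m.-1) (deltaN m).
Proof.
elim: m => //= m IH; rewrite all_cat; apply/andP; split.
  by apply/allP => c; rewrite mem_iota; lia.
by apply: sub_all IH => c; lia.
Qed.

Lemma deltaN_far m : all (far m) (deltaN m).
Proof. by apply: sub_all (deltaN_bound m) => c; rewrite /far; lia. Qed.

Lemma deltaNS_down m : deltaN m.+1 ≡ deltaN m ++ down 0 m.
Proof.
elim: m => // m IH.
rewrite [in X in _ ≡ X]deltaNS [deltaN m.+2]deltaNS IH down_S add0n -catA.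
rewrite -(far_cons_cat _ _ _ (deltaN_far m)).
by rewrite -addn1 iotaD -catA.
Qed.

Lemma deltaN_rev m : rev (deltaN m) ≡ deltaN m.
Proof.
elim: m => // m IH.
have -> : rev (deltaN m.+1) = rev (deltaN m) ++ down 0 m by rewrite deltaNS rev_cat.
by rewrite IH deltaNS_down.
Qed.

Lemma iota_cat_shift i m : i.+1 < m -> iota 0 m ++ [:: i] ≡ i.+1 :: iota 0 m.
Proof.
move=> Hm; have -> : m = i + (m - i.+2).+2 by lia.
rewrite iotaD add0n /=; set r := iota i.+2 _.
have Fr : all (far i) r by apply/allP => c; rewrite mem_iota /far; lia.
have Fl : all (far i.+1) (iota 0 i) by apply/allP => c; rewrite mem_iota /far; lia.
have Ai : adj i i.+1 by rewrite /adj eqxx.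
rewrite -catA /= -(far_cons_cat _ _ _ Fr) cats0 (adj_braid Ai).
by rewrite far_cons_cat.
Qed.

Lemma ldivN_deltaN i m : i < m -> ldivN [:: i] (deltaN m.+1).
Proof.
elim: m i => [//|m IH] [_|i Hi]; first by exists (iota 1 m ++ deltaN m.+1).
have [v Hv] := IH i Hi; exists (iota 0 m.+1 ++ v).
by rewrite cat1s [deltaN m.+2]deltaNS -Hv catA iota_cat_shift.
Qed.

Lemma ldivN_deltaNP i m : ldivN [:: i] (deltaN m.+1) <-> i < m.
Proof.
split=> [[v /braid_eq_mem /(_ i)] | /ldivN_deltaN //].
by rewrite inE eqxx => /esym /(allP (deltaN_bound m.+1)).
Qed.

Lemma deltaN_ldivN m x : (forall i, i < m -> ldivN [:: i] x) -> ldivN (deltaN m.+1) x.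
Proof.
elim: m x => [|m IH] x H; first by exists x.
have [y Hy] := IH x (fun i Hi => H i (ltnW Hi)).
have : ldivN [:: m] (down 0 m ++ y).
  apply: (ldivN_far_cat _ _ _ (deltaN_far m)).
  by rewrite catA -deltaNS_down Hy; apply: H.
move/(ldivN_down_cat m 0) => [w Hw]; rewrite addn1 in Hw.
by exists w; rewrite deltaNS_down -catA Hw.
Qed.

Lemma deltaN_rdivNP m x : (forall i, i < m -> rdivN [:: i] x) <-> rdivN (deltaN m.+1) x.
Proof.
have rdiv_gen i : i < m -> rdivN [:: i] (deltaN m.+1).
  by move=> Hi; apply/rdivN_ldivN_rev; rewrite deltaN_rev; apply: ldivN_deltaN.
split=> [H | H i /rdiv_gen Hi]; last exact: rdivN_trans Hi H.
apply/rdivN_ldivN_rev; rewrite deltaN_rev; apply: deltaN_ldivN => i.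
by move/H/rdivN_ldivN_rev.
Qed.

(** * Simple braids and their normal sequences *)

Section Transfer.

Variable n : nat.

Definition wval (u : word n) : seq nat := map val u.
Definition wsub (s : seq nat) : word n := pmap insub s.

Lemma wvalK : cancel wval wsub. Proof. exact: map_pK valK. Qed.

Lemma wsubK s : all (fun c => c < n.-1) s -> wval (wsub s) = s.
Proof.
elim: s => //= c s IH /andP [Hc /IH Hs].
by rewrite /wsub /= (insubT (fun m => m < n.-1) Hc) /= Hs.
Qed.

Lemma wval_cat u v : wval (u ++ v) = wval u ++ wval v. Proof. exact: map_cat. Qed.

Lemma wval_bound u : all (fun c => c < n.-1) (wval u).
Proof. by apply/allP => c /mapP [i _ ->]; apply: ltn_ord. Qed.

Lemma beq_wsub s t : s ≡ t -> all (fun c => c < n.-1) s -> beq n (wsub s) (wsub t).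
Proof.
elim=> {s t} [s t Hst|s|s t Hst IH|s t w Hst IHst _ IHtw] Hs.
- apply: rst_step; case: Hst Hs => p q x y F; rewrite !all_cat /= => /and3P [_ /and3P [Hx Hy _] _];
  rewrite /wsub !pmap_cat /= (insubT (fun m => m < n.-1) Hx) (insubT (fun m => m < n.-1) Hy).
  + exists (wsub p), (wsub q), [:: Sub x Hx; Sub y Hy], [:: Sub y Hy; Sub x Hx].
    by split=> //; left; exists (Sub x Hx), (Sub y Hy).
  + exists (wsub p), (wsub q), [:: Sub x Hx; Sub y Hy; Sub x Hx], [:: Sub y Hy; Sub x Hx; Sub y Hy].
    by split=> //; right; exists (Sub x Hx), (Sub y Hy).
- exact: rst_refl.
- by apply: rst_sym; apply: IH; rewrite (eq_all_r (braid_eq_mem Hst)).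
- by apply: rst_trans (IHst Hs) (IHtw _); rewrite -(eq_all_r (braid_eq_mem Hst)).
Qed.

Lemma beq_wval u v : beq n u v <-> wval u ≡ wval v.
Proof.
split=> [|H]; last by rewrite -(wvalK u) -(wvalK v); apply: beq_wsub (wval_bound u).
apply: (clos_rst_morph (R := braid_eq)) => _ _ [p [q [x [y [Hr [-> ->]]]]]].
rewrite !wval_cat; apply: rst_step.
by case: Hr => -[i [j [C [-> ->]]]]; constructor.
Qed.

Lemma ldiv_wval u w : ldiv n u w <-> ldivN (wval u) (wval w).
Proof.
split=> -[v H]; first by exists (wval v); rewrite -wval_cat; apply/beq_wval.
have Hv : all (fun c => c < n.-1) v.
  by move: (wval_bound w); rewrite -(eq_all_r (braid_eq_mem H)) all_cat => /andP [].
by exists (wsub v); apply/beq_wval; rewrite wval_cat wsubK.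
Qed.

Lemma rdiv_wval u w : rdiv n u w <-> rdivN (wval u) (wval w).
Proof.
split=> -[v H]; first by exists (wval v); rewrite -wval_cat; apply/beq_wval.
have Hv : all (fun c => c < n.-1) v.
  by move: (wval_bound w); rewrite -(eq_all_r (braid_eq_mem H)) all_cat => /andP [].
by exists (wsub v); apply/beq_wval; rewrite wval_cat wsubK.
Qed.

Lemma wval_delta m : m <= n -> wval (delta n m) = deltaN m.
Proof.
move=> Hm; have -> : delta n m = wsub (deltaN m).
  by elim: m {Hm} => //= m ->; rewrite /wsub pmap_cat.
by rewrite wsubK //; apply: sub_all (deltaN_bound m) => c; lia.
Qed.

Lemma mem_DL_delta m (i : gen n) : m <= n -> (i \in DL n (delta n m)) = (i < m.-1).
Proof.
move=> Hm; rewrite inE; apply/asboolP/idP => [/ldiv_wval | Hi].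
  by rewrite wval_delta // deltaN_pred => /ldivN_deltaNP.
by apply/ldiv_wval; rewrite wval_delta // deltaN_pred; apply/ldivN_deltaNP.
Qed.

Lemma nrel_deltaE m w : m <= n -> nrel n w (delta n m) = `[< rdiv n (delta n m) w >].
Proof.
move=> Hm; apply/subsetP/asboolP => [H | H i]; last first.
  rewrite mem_DL_delta // inE => Hi; apply/asboolP/rdiv_wval.
  by move/rdiv_wval: H; rewrite wval_delta // deltaN_pred -deltaN_rdivNP; apply.
apply/rdiv_wval; rewrite wval_delta // deltaN_pred -deltaN_rdivNP => i Hi.
have Hin : i < n.-1 by lia.
have /H : Ordinal Hin \in DL n (delta n m) by rewrite mem_DL_delta.
by rewrite inE => /asboolP /rdiv_wval.
Qed.

End Transfer.

Lemma normal_rcons2 n s (a c : word n) :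
  normal n (rcons (rcons s a) c) = normal n (rcons s a) && nrel n a c.
Proof. by rewrite /normal -cats1 cat_rcons sorted_cat_cons /= andbT. Qed.

Lemma card_rcons_tuple (T : finType) k (P : pred (seq T)) :
  #|[set t : k.+1.-tuple T | P t]| = \sum_(x : T) #|[set t : k.-tuple T | P (rcons t x)]|.
Proof.
pose h (p : T * k.-tuple T) := [tuple of rcons p.2 p.1].
have h_inj : injective h by move=> [x t] [y u] /(congr1 val) /rcons_inj [/val_inj -> ->].
have h_bij : bijective h.
  by apply: inj_card_bij h_inj _; rewrite card_prod !card_tuple expnS.
rewrite -sum1dep_card (reindex h (onW_bij _ h_bij)).
under [RHS]eq_bigr do rewrite -sum1dep_card.
by rewrite pair_big_dep; apply: eq_bigl => -[x t].
Qed.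

Theorem lemma4p3 (n d r : nat) :
  (1 <= n)%N -> (2 <= d)%N -> (1 <= r <= n)%N ->
  b n d (delta n (n - r)) =
  (\sum_(x : SB n | `[< rdiv n (delta n (n - r)) (sbw n x) >]) b n d.-1 (sbw n x))%N.
Proof.
move=> _ Hd _; case: d Hd => [|[|e]] // _.
set D := delta n (n - r).
rewrite /b /= (card_rcons_tuple _ _ (fun s => normal n (rcons (map (sbw n) s) D))).
rewrite [RHS]big_mkcond; apply: eq_bigr => x _.
rewrite -nrel_deltaE ?leq_subr //.
have -> : [set t : e.-tuple (SB n) | normal n (rcons (map (sbw n) (rcons t x)) D)] =
          [set t : e.-tuple (SB n) | normal n (rcons (map (sbw n) t) (sbw n x)) && nrel n (sbw n x) D].
  by apply/setP => t; rewrite !inE map_rcons normal_rcons2.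
case: (nrel n (sbw n x) D).
  by apply: eq_card => t; rewrite !inE andbT.
by apply: eq_card0 => t; rewrite !inE andbF.
Qed.
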